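(* The class of penny graphs is $(6,1)$-disjointness-expressing.
   Context: A penny graph is the contact graph of a family of pairwise interior-disjoint unit disks in the plane (vertices are the disks, adjacent iff the disks touch). A class $\mathcal{C}$ of graphs is $(s,\kappa)$-disjointness-expressing if for some constant $\alpha>0$, for every positive integer $N$ and every $X\subseteq\{1,\dots,N\}$ one can define graphs $L(X)$ and $R(X)$, each containing a labelled set $S$ of special vertices, such that for all $A,B\subseteq\{1,\dots,N\}$: (i) the graph $g(L(A),R(B))$ obtained by identifying each vertex of $S$ in $L(A)$ with the corresponding vertex of $S$ in $R(B)$ is connected and has at most $\alpha N^{1/\kappa}$ vertices; (ii) the subgraph of $g(L(A),R(B))$ induced by the closed neighborhood $N[S]$ is independent of $A,B$ (for all $A,A',B,B'$ there is an isomorphism between these induced subgraphs that is the identity on $S$) and has at most $s$ vertices; (iii) $g(L(A),R(B))\in\mathcal{C}$ if and only if $A\cap B=\emptyset$. *)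

From mathcomp Require Import all_boot.
From Stdlib Require Import Reals.

Set Implicit Arguments.
Unset Strict Implicit.
Unset Printing Implicit Defensive.

Definition pdist (p q : R * R) : R :=
  sqrt ((fst p - fst q)^2 + (snd p - snd q)^2)%R.

(** A graph (V, e) is a penny graph if there is a family of unit disks
    (given by their centres c v) that are pairwise interior-disjoint
    (distinct centres at distance >= 2) and two vertices are adjacent
    iff their disks touch (centres at distance exactly 2). *)
Definition penny (V : finType) (e : rel V) : Prop :=
  exists c : V -> R * R,
    (forall u v : V, u != v -> (2 <= pdist (c u) (c v))%R) /\
    (forall u v : V, e u v <-> pdist (c u) (c v) = 2%R).

Record sgraph (k : nat) := SGraph {
  sn : nat;
  sadj : rel 'I_sn;
  sS : 'I_k -> 'I_sn
}.
Arguments sn {k} _.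
Arguments sadj {k} _ _ _.
Arguments sS {k} _ _.

Definition sgraph_wf k (G : sgraph k) : Prop :=
  symmetric (sadj G) /\ irreflexive (sadj G) /\ injective (sS G).

Section Glue.
Variables (k : nat) (L Rg : sgraph k).

(** vertices of the glued graph g(L,R): all vertices of L, plus the
    non-special vertices of R. *)
Definition gV : finType :=
  ('I_(sn L) + {v : 'I_(sn Rg) | ~~ [exists i, sS Rg i == v]})%type.

Lemma nopick_notS (v : 'I_(sn Rg)) :
  (fun i => sS Rg i == v) =1 xpred0 -> ~~ [exists i, sS Rg i == v].
Proof. by move=> H; apply/existsP => -[i]; rewrite H. Qed.

(** image of a vertex of R in the glued graph: the special vertex with
    label i of R is identified with the special vertex with label i of L. *)
Definition liftR (v : 'I_(sn Rg)) : gV :=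
  match pickP (fun i => sS Rg i == v) with
  | Pick i _ => inl (sS L i)
  | Nopick H => inr (exist _ v (nopick_notS H))
  end.

Definition liftL (u : 'I_(sn L)) : gV := inl u.

Definition gadj : rel gV := fun x y =>
  [exists u, exists w, [&& sadj L u w, liftL u == x & liftL w == y]] ||
  [exists u, exists w, [&& sadj Rg u w, liftR u == x & liftR w == y]].

Definition gspec (i : 'I_k) : gV := liftL (sS L i).

Definition gNS : {set gV} :=
  [set x | [exists i, (x == gspec i) || gadj (gspec i) x]].

End Glue.
Arguments gV {k} L Rg.
Arguments liftR {k} L Rg v.
Arguments liftL {k} L Rg u.
Arguments gadj {k} L Rg _ _.
Arguments gspec {k} L Rg i.
Arguments gNS {k} L Rg.

Definition NS_iso k (L1 R1 L2 R2 : sgraph k) : Prop :=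
  exists f : gV L1 R1 -> gV L2 R2,
    {in gNS L1 R1 &, injective f} /\
    f @: gNS L1 R1 = gNS L2 R2 /\
    {in gNS L1 R1 &, forall x y, gadj L2 R2 (f x) (f y) = gadj L1 R1 x y} /\
    (forall i, f (gspec L1 R1 i) = gspec L2 R2 i).

(** A class of graphs is given as a predicate on (finite vertex type,
    adjacency relation). Subsets of {1,...,N} are modelled as subsets of
    'I_N = {0,...,N-1}. *)
Definition disjointness_expressing
  (C : forall V : finType, rel V -> Prop) (s kappa : nat) : Prop :=
  exists alpha : R, (0 < alpha)%R /\
  forall N : nat, (0 < N)%N ->
  exists (k : nat) (L Rg : {set 'I_N} -> sgraph k),
    (forall X, sgraph_wf (L X) /\ sgraph_wf (Rg X)) /\
    (forall A B,
       (forall x y, connect (gadj (L A) (Rg B)) x y) /\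
       (INR #|gV (L A) (Rg B)| <= alpha * Rpower (INR N) (1 / INR kappa))%R) /\
    (forall A A' B B', NS_iso (L A) (Rg B) (L A') (Rg B')) /\
    (forall A B, (#|gNS (L A) (Rg B)| <= s)%N) /\
    (forall A B, C _ (gadj (L A) (Rg B)) <-> A :&: B = set0).

(* All gadgets are drawn on the triangular lattice: a point [(a, b)] of [Z * Z] stands
   for [a e1 + b e2], where [e1], [e2] are unit vectors at 60 degrees, and two vertices are
   adjacent exactly when their lattice points are at distance 1.  [L(A)] is a ladder of
   triangles carrying, for each [t < N], a tooth at height [3t + 3], on the right of the
   ladder if [t \in A] and on its left otherwise.  [R(B)] leaves the special edge
   [(0,0)-(1,0)], passes beneath it and climbs a parallel ladder two columns further right,
   whose [t]-th tooth points left exactly when [t \in B].  After gluing, the two [t]-th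
   teeth are at unit distance iff [t \in A :&: B], and no other pair of vertices from
   different sides comes that close.

   If [A :&: B = set0], the lattice drawing itself is a penny realization.  Conversely,
   every vertex of the glued graph closes a new triangle on an edge of earlier triangles,
   and a unit disk touching two touching unit disks has only two possible places; hence
   every penny realization is an affine image of the lattice drawing, and it makes two
   non-adjacent teeth touch whenever [A :&: B] is nonempty. *)

From Stdlib Require Import Reals ZArith Lia Lra.
From mathcomp Require Import all_boot zify.

Set Implicit Arguments.
Unset Strict Implicit.
Unset Printing Implicit Defensive.

(** * The triangular lattice *)

(* [|a e1 + b e2|^2 = a^2 + a b + b^2]. *)
Definition tdist2 (p q : Z * Z) : Z :=
  let x := (p.1 - q.1)%Z in let y := (p.2 - q.2)%Z in (x * x + x * y + y * y)%Z.

Definition tadj (p q : Z * Z) : bool := (tdist2 p q =? 1)%Z.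

(* The reflection of [w] in the midpoint of [pq], i.e. the apex of the other triangle on
   the edge [pq]. *)
Definition tflip (p q w : Z * Z) : Z * Z := (p.1 + q.1 - w.1, p.2 + q.2 - w.2)%Z.

Lemma tdist2C p q : tdist2 p q = tdist2 q p.
Proof. rewrite /tdist2; lia. Qed.

Lemma tdist2xx p : tdist2 p p = 0%Z.
Proof. rewrite /tdist2; lia. Qed.

Lemma tadjC : symmetric tadj.
Proof. by move=> p q; rewrite /tadj tdist2C. Qed.

Lemma tadj_irr : irreflexive tadj.
Proof. by move=> p; rewrite /tadj tdist2xx. Qed.

Lemma tdist2_double p q : (2 * tdist2 p q = (p.1 - q.1) * (p.1 - q.1) +
  (p.2 - q.2) * (p.2 - q.2) + (p.1 - q.1 + (p.2 - q.2)) * (p.1 - q.1 + (p.2 - q.2)))%Z.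
Proof. rewrite /tdist2; ring. Qed.

Lemma tdist2_eq0 p q : tdist2 p q = 0%Z -> p = q.
Proof.
case: p q => [a b] [c d] H; have := tdist2_double (a, b) (c, d); rewrite H /= => E.
have sq1 := Z.square_nonneg (a - c); have sq2 := Z.square_nonneg (b - d).
have sq3 := Z.square_nonneg (a - c + (b - d)).
by have [-> ->] : a = c /\ b = d by nia.
Qed.

Lemma tdist2_ge0 p q : (0 <= tdist2 p q)%Z.
Proof.
have := tdist2_double p q; move: (p.1 - q.1)%Z (p.2 - q.2)%Z => x y E.
have := Z.square_nonneg x; have := Z.square_nonneg y; have := Z.square_nonneg (x + y).
nia.
Qed.

Lemma tdist2_le1 p q : (tdist2 p q <= 1)%Z ->
  (-1 <= p.1 - q.1 <= 1 /\ -1 <= p.2 - q.2 <= 1 /\ -1 <= p.1 - q.1 + (p.2 - q.2) <= 1)%Z.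
Proof.
have := tdist2_double p q; move: (p.1 - q.1)%Z (p.2 - q.2)%Z => x y E H.
have := Z.square_nonneg x; have := Z.square_nonneg y; have := Z.square_nonneg (x + y).
nia.
Qed.

(** * Unit distances in the plane *)

Section Plane.
Local Open Scope R_scope.

Definition pdist2 (p q : R * R) : R := (p.1 - q.1) ^ 2 + (p.2 - q.2) ^ 2.

Definition pflip (p q w : R * R) : R * R := (p.1 + q.1 - w.1, p.2 + q.2 - w.2).

Lemma pdist2_ge0 p q : 0 <= pdist2 p q.
Proof. by apply: Rplus_le_le_0_compat; apply: pow2_ge_0. Qed.

Lemma pdist2xx p : pdist2 p p = 0.
Proof. by rewrite /pdist2; ring. Qed.

Lemma pdist_eq2 p q : pdist p q = 2 <-> pdist2 p q = 4.
Proof.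
rewrite /pdist -/(pdist2 p q); split => H.
- by have := sqrt_sqrt _ (pdist2_ge0 p q); rewrite H; lra.
- by rewrite H -(sqrt_square 2); [congr sqrt; ring | lra].
Qed.

Lemma pdist_ge2 p q : 2 <= pdist p q <-> 4 <= pdist2 p q.
Proof.
rewrite /pdist -/(pdist2 p q); split => H.
- by have := sqrt_sqrt _ (pdist2_ge0 p q); nra.
- by rewrite -(sqrt_square 2); [apply: sqrt_le_1; lra | lra].
Qed.

Lemma perp_same_norm (u1 u2 v1 v2 d1 d2 : R) :
  u1 * d1 + u2 * d2 = 0 -> v1 * d1 + v2 * d2 = 0 -> d1 * d1 + d2 * d2 <> 0 ->
  u1 * u1 + u2 * u2 = v1 * v1 + v2 * v2 ->
  (u1 = v1 /\ u2 = v2) \/ (u1 = - v1 /\ u2 = - v2).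
Proof.
move=> ud vd d0 uv.
have cross0 : u1 * v2 - u2 * v1 = 0.
  apply: (Rmult_eq_reg_r (d1 * d1 + d2 * d2)) => //.
  have -> : (u1 * v2 - u2 * v1) * (d1 * d1 + d2 * d2) =
    (u1 * d1 + u2 * d2) * (v2 * d1 - v1 * d2) - (v1 * d1 + v2 * d2) * (u2 * d1 - u1 * d2)
    by ring.
  rewrite ud vd; ring.
have uv2 : (u1 * v1 + u2 * v2) ^ 2 = (v1 * v1 + v2 * v2) ^ 2.
  have -> : (u1 * v1 + u2 * v2) ^ 2 =
    (u1 * u1 + u2 * u2) * (v1 * v1 + v2 * v2) - (u1 * v2 - u2 * v1) ^ 2 by ring.
  rewrite uv cross0; ring.
have [dot|dot] : u1 * v1 + u2 * v2 = v1 * v1 + v2 * v2 \/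
                 u1 * v1 + u2 * v2 = - (v1 * v1 + v2 * v2) by nra.
- left; have E : (u1 - v1) ^ 2 + (u2 - v2) ^ 2 = 0.
    have -> : (u1 - v1) ^ 2 + (u2 - v2) ^ 2 =
      (u1 * u1 + u2 * u2) + (v1 * v1 + v2 * v2) - 2 * (u1 * v1 + u2 * v2) by ring.
    rewrite uv dot; ring.
  have := pow2_ge_0 (u1 - v1); have := pow2_ge_0 (u2 - v2); split; nra.
- right; have E : (u1 + v1) ^ 2 + (u2 + v2) ^ 2 = 0.
    have -> : (u1 + v1) ^ 2 + (u2 + v2) ^ 2 =
      (u1 * u1 + u2 * u2) + (v1 * v1 + v2 * v2) + 2 * (u1 * v1 + u2 * v2) by ring.
    rewrite uv dot; ring.
  have := pow2_ge_0 (u1 + v1); have := pow2_ge_0 (u2 + v2); split; nra.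
Qed.

(* Both [X] and [W] lie on the perpendicular bisector of [PQ] at distance sqrt 3 from
   its midpoint, hence they coincide or are mirror images of each other. *)
Lemma equilateral_apex (P Q W X : R * R) :
  pdist2 P Q = 4 -> pdist2 P W = 4 -> pdist2 Q W = 4 -> pdist2 X P = 4 -> pdist2 X Q = 4 ->
  X <> W -> X = pflip P Q W.
Proof.
case: P Q W X => [p1 p2] [q1 q2] [w1 w2] [x1 x2]; rewrite /pdist2 /pflip /=.
move=> PQ PW QW XP XQ XW.
have [[e1 e2]|[e1 e2]] :=
  @perp_same_norm (2 * x1 - p1 - q1) (2 * x2 - p2 - q2) (2 * w1 - p1 - q1) (2 * w2 - p2 - q2)
                  (q1 - p1) (q2 - p2) ltac:(nra) ltac:(nra) ltac:(nra) ltac:(nra).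
- by case: XW; congr pair; lra.
- by congr pair; lra.
Qed.

Definition lattice_map (o a b : R * R) (z : Z * Z) : R * R :=
  (o.1 + IZR z.1 * (a.1 - o.1) + IZR z.2 * (b.1 - o.1),
   o.2 + IZR z.1 * (a.2 - o.2) + IZR z.2 * (b.2 - o.2)).

Lemma lattice_map_base o a b :
  [/\ lattice_map o a b (0, 0)%Z = o, lattice_map o a b (1, 0)%Z = a
     & lattice_map o a b (0, 1)%Z = b].
Proof. by case: o a b => [? ?] [? ?] [? ?]; split; rewrite /lattice_map /=; congr pair; ring. Qed.

Lemma lattice_map_tflip o a b p q w :
  lattice_map o a b (tflip p q w) =
  pflip (lattice_map o a b p) (lattice_map o a b q) (lattice_map o a b w).
Proof. by rewrite /lattice_map /tflip /pflip /= !minus_IZR !plus_IZR; congr pair; ring. Qed.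

Lemma pdist2_lattice_map o a b : pdist2 o a = 4 -> pdist2 o b = 4 -> pdist2 a b = 4 ->
  forall z z', pdist2 (lattice_map o a b z) (lattice_map o a b z') = 4 * IZR (tdist2 z z').
Proof.
rewrite /pdist2 /lattice_map /tdist2 /= => oa ob ab z z'.
rewrite !plus_IZR !mult_IZR !minus_IZR.
move: (IZR z.1) (IZR z.2) (IZR z'.1) (IZR z'.2) => x y x' y'.
(* Polarization: [2 (a - o).(b - o) = |a - o|^2 + |b - o|^2 - |a - b|^2 = 4]. *)
have -> : 4 * ((x - x') * (x - x') + (x - x') * (y - y') + (y - y') * (y - y')) =
  (x - x') ^ 2 * ((o.1 - a.1) ^ 2 + (o.2 - a.2) ^ 2)
  + (y - y') ^ 2 * ((o.1 - b.1) ^ 2 + (o.2 - b.2) ^ 2)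
  + (x - x') * (y - y') * ((o.1 - a.1) ^ 2 + (o.2 - a.2) ^ 2 + ((o.1 - b.1) ^ 2 + (o.2 - b.2) ^ 2)
                           - ((a.1 - b.1) ^ 2 + (a.2 - b.2) ^ 2)) by rewrite oa ob ab; ring.
ring.
Qed.

Definition tri_embed : Z * Z -> R * R := lattice_map (0, 0) (2, 0) (1, sqrt 3).

Lemma pdist2_tri_embed z z' : pdist2 (tri_embed z) (tri_embed z') = 4 * IZR (tdist2 z z').
Proof.
have s3 := sqrt_sqrt 3 ltac:(lra).
by apply: pdist2_lattice_map; rewrite /pdist2 /=; nra.
Qed.

End Plane.

(** * Rigidity of triangulated graphs *)

Section Triangulated.
Variables (G : Type) (adj : rel G) (pos : G -> Z * Z) (rank : G -> nat) (base : pred G).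

(* [x] closes a new triangle on the edge [pq] of the earlier triangle [pqw]. *)
Definition is_apex (x p q w : G) : Prop :=
  [/\ (rank p < rank x)%N, (rank q < rank x)%N, (rank w < rank x)%N,
      [&& adj x p, adj x q, adj p q, adj p w & adj q w] &
      pos x = tflip (pos p) (pos q) (pos w)].

Definition triangulated : Prop :=
  forall x, ~~ base x -> exists p q w, is_apex x p q w.

Hypothesis triG : triangulated.

Lemma triangulated_ind (P : G -> Prop) :
  {in base, forall x, P x} ->
  (forall x p q w, is_apex x p q w -> P p -> P q -> P w -> P x) ->
  forall x, P x.
Proof.
move=> Pbase Papex x; move: {2}(rank x).+1 (ltnSn (rank x)) => n.
elim: n x => // n IHn x ltxn.
have [/Pbase //|/triG [p [q [w apex]]]] := boolP (base x).
have IH y : (rank y < rank x)%N -> P y by move=> lt; apply: IHn; exact: leq_trans lt ltxn.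
by case: (apex) => ltp ltq ltw _ _; apply: (Papex x p q w apex); apply: IH.
Qed.

Local Open Scope R_scope.

Lemma triangulated_rigid (c : G -> R * R) (F : Z * Z -> R * R) :
  (forall x y, adj x y -> pdist2 (c x) (c y) = 4) -> injective c ->
  (forall p q w, F (tflip p q w) = pflip (F p) (F q) (F w)) ->
  {in base, forall x, c x = F (pos x)} ->
  forall x, c x = F (pos x).
Proof.
move=> unit_edges c_inj Faff c_base.
apply: (triangulated_ind (P := fun x => c x = F (pos x))) => //.
move=> x p q w [_ _ ltw /and5P [xp xq pq pw qw] ->] cp cq cw.
rewrite Faff -cp -cq -cw; apply: equilateral_apex; rewrite ?unit_edges //.
by move/c_inj => exw; move: ltw; rewrite exw ltnn.
Qed.

End Triangulated.

Lemma triangulated_connect (G : finType) (adj : rel G) pos rank (base : pred G) :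
  triangulated adj pos rank base -> symmetric adj ->
  {in base &, forall x y, connect adj x y} -> (exists b, base b) ->
  forall x y, connect adj x y.
Proof.
move=> triG adjC base_conn [b0 b0_base].
have to_b0 : forall x, connect adj x b0.
  apply: (triangulated_ind triG (P := fun x => connect adj x b0)) => [x xb|].
    exact: base_conn.
  by move=> x p q w [_ _ _ /and5P [xp _ _ _ _] _] pb _ _; exact: connect_trans (connect1 xp) pb.
move=> x y; apply: connect_trans (to_b0 x) _.
by rewrite (sym_connect_sym adjC) to_b0.
Qed.

(** * Gluing *)

Section Glue.
Variables (k : nat) (L R : sgraph k).

Lemma gadj_sym : symmetric (sadj L) -> symmetric (sadj R) -> symmetric (gadj L R).
Proof.
move=> LC RC x y; rewrite /gadj.
congr orb; apply/existsP/existsP => -[u /existsP [w /and3P [uw ux wy]]];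
  exists w; apply/existsP; exists u; rewrite ux wy; first [by rewrite LC uw | by rewrite RC uw].
Qed.

Lemma card_gV : (#|gV L R| <= sn L + sn R)%N.
Proof.
rewrite card_sum card_ord leq_add2l card_sig.
exact: leq_trans (max_card _) (eq_leq (card_ord _)).
Qed.

(* A non-special vertex of [L] and a vertex of [R]: no edge of the glued graph joins them. *)
Definition crossing (x y : gV L R) : bool :=
  match x, y with
  | inl u, inr _ | inr _, inl u => ~~ [exists i, sS L i == u]
  | _, _ => false
  end.

Lemma liftR_spec v :
  (exists i, v = sS R i /\ liftR L R v = inl (sS L i)) \/
  (exists nsv, liftR L R v = inr (exist _ v nsv)).
Proof.
rewrite /liftR; case: pickP => [i /eqP vi|nsv]; first by left; exists i.
by right; eexists.
Qed.

Lemma liftR_sS i : injective (sS R) -> liftR L R (sS R i) = inl (sS L i).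
Proof.
move=> sR_inj; rewrite /liftR; case: pickP => [j /eqP ji | nopick].
  by rewrite (sR_inj _ _ ji).
by have := nopick i; rewrite eqxx.
Qed.

Lemma liftR_val (v : {v : 'I_(sn R) | ~~ [exists i, sS R i == v]}) : liftR L R (val v) = inr v.
Proof.
case: (liftR_spec (val v)) => [[i [vi _]]|[nsv ->]]; last by congr inr; apply: val_inj.
by case/negP: (valP v); apply/existsP; exists i; rewrite vi.
Qed.

Lemma crossing_liftR v w : crossing (liftR L R v) (liftR L R w) = false.
Proof.
have special i : ~~ ~~ [exists j, sS L j == sS L i] by rewrite negbK; apply/existsP; exists i.
by case: (liftR_spec v) => [[i [_ ->]]|[? ->]]; case: (liftR_spec w) => [[j [_ ->]]|[? ->]];
  rewrite //= ?(negbTE (special _)).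
Qed.

End Glue.

Definition pos_sgraph k (P : Type) (E : rel P) n (p : 'I_n -> P) (s : 'I_k -> 'I_n) : sgraph k :=
  @SGraph k n (fun u w => E (p u) (p w)) s.

Lemma pos_sgraph_wf k P (E : rel P) n (p : 'I_n -> P) (s : 'I_k -> 'I_n) :
  symmetric E -> irreflexive E -> injective s -> sgraph_wf (pos_sgraph E p s).
Proof. by move=> EC Eirr sinj; split; [move=> u w; exact: EC|split; [move=> u; exact: Eirr|]]. Qed.

Section PosGlue.
Variables (k : nat) (P : Type) (E : rel P) (nl nr : nat).
Variables (pl : 'I_nl -> P) (sl : 'I_k -> 'I_nl) (pr : 'I_nr -> P) (sr : 'I_k -> 'I_nr).
Hypothesis sr_inj : injective sr.
Hypothesis special_pos : forall i, pl (sl i) = pr (sr i).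

Local Notation L := (pos_sgraph E pl sl).
Local Notation R := (pos_sgraph E pr sr).

Definition glued_pos (x : gV L R) : P :=
  match x with inl u => pl u | inr v => pr (val v) end.

Lemma glued_pos_liftR v : glued_pos (liftR L R v) = pr v.
Proof. by case: (liftR_spec L v) => [[i [-> ->]]|[nsv ->]]; first exact: special_pos. Qed.

Lemma gadj_pos x y : gadj L R x y = E (glued_pos x) (glued_pos y) && ~~ crossing x y.
Proof.
apply/idP/andP.
- case/orP => /existsP [u /existsP [w /and3P [uw /eqP <- /eqP <-]]].
    by [].
  by rewrite !glued_pos_liftR crossing_liftR.
- move=> [Exy ncross]; apply/orP.
  case: x y Exy ncross => [u|v] [w|v'] /= Exy ncross.
  + by left; apply/existsP; exists u; apply/existsP; exists w; rewrite Exy !eqxx.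
  + case/existsP: (negbNE ncross) => i /eqP ui.
    right; apply/existsP; exists (sr i); apply/existsP; exists (val v').
    by rewrite liftR_sS // liftR_val /= -special_pos ui Exy !eqxx.
  + case/existsP: (negbNE ncross) => i /eqP wi.
    right; apply/existsP; exists (val v); apply/existsP; exists (sr i).
    by rewrite liftR_sS // liftR_val /= -special_pos wi Exy !eqxx.
  + right; apply/existsP; exists (val v); apply/existsP; exists (val v').
    by rewrite !liftR_val Exy !eqxx.
Qed.

End PosGlue.

(** * The gadgets [L(A)] and [R(B)] *)

Ltac lattice_lia := cbn [fst snd] in *; try Z.to_euclidean_division_equations; lia.

Lemma tdist2_unit (a b : Z) p q : (p.1 - q.1 = a)%Z -> (p.2 - q.2 = b)%Z ->
  tdist2 p q = (a * a + a * b + b * b)%Z.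
Proof. by rewrite /tdist2 => -> ->. Qed.

Ltac lattice_unit :=
  match goal with |- tdist2 ?p ?q = 1%Z =>
  first [ rewrite (@tdist2_unit 1 0 p q); [done|lattice_lia|lattice_lia]
        | rewrite (@tdist2_unit (-1) 0 p q); [done|lattice_lia|lattice_lia]
        | rewrite (@tdist2_unit 0 1 p q); [done|lattice_lia|lattice_lia]
        | rewrite (@tdist2_unit 0 (-1) p q); [done|lattice_lia|lattice_lia]
        | rewrite (@tdist2_unit 1 (-1) p q); [done|lattice_lia|lattice_lia]
        | rewrite (@tdist2_unit (-1) 1 p q); [done|lattice_lia|lattice_lia] ] end.

Definition lattice_apex (ps : nat -> Z * Z) : nat -> nat -> nat -> nat -> Prop :=
  is_apex (fun a b => tadj (ps a) (ps b)) ps id.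

Ltac solve_apex := split; [lattice_lia | lattice_lia | lattice_lia
  | apply/and5P; split; apply/Z.eqb_spec; lattice_unit
  | rewrite /tflip; congr pair; lattice_lia].

Section Positions.
Variable N : nat.

(* Successor forms, so that [inord] maps into ['I_nL] and ['I_nR]. *)
Definition nL := (7 * N + 3).+1.
Definition nR := (7 * N + 14).+1.

Definition nat_in (A : {set 'I_N}) (t : nat) : bool := [exists j in A, nat_of_ord j == t].

Definition posL (A : {set 'I_N}) (i : nat) : Z * Z :=
  if (i < 6 * N + 4)%N then (Z.of_nat i mod 2, Z.of_nat i / 2)%Z
  else let t := (i - (6 * N + 4))%N in
       if nat_in A t then (2, 3 * Z.of_nat t + 3)%Z else (-1, 3 * Z.of_nat t + 3)%Z.

(* The path from the special edge to the ladder of [R], kept below row 0. *)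
Definition tabR : seq (Z * Z) :=
  [:: (0,0); (1,0); (1,-1); (2,-1); (2,-2); (3,-2); (3,-1); (4,-2); (4,-1); (5,-2)]%Z.

Definition posR (B : {set 'I_N}) (i : nat) : Z * Z :=
  if (i < 10)%N then nth (0,0)%Z tabR i
  else if (i < 6 * N + 15)%N then (4 + Z.of_nat (i - 7) mod 2, Z.of_nat (i - 7) / 2 - 2)%Z
  else let t := (i - (6 * N + 15))%N in
       if nat_in B t then (3, 3 * Z.of_nat t + 3)%Z else (6, 3 * Z.of_nat t + 3)%Z.

Lemma nat_inE (A : {set 'I_N}) (t : 'I_N) : nat_in A t = (t \in A).
Proof.
apply/existsP/idP => [[j /andP [jA /eqP jt]]|tA]; last by exists t; rewrite tA eqxx.
by rewrite -(val_inj jt).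
Qed.

Lemma nat_in_disjoint (A B : {set 'I_N}) t :
  A :&: B = set0 -> nat_in A t -> nat_in B t -> False.
Proof.
move=> AB /existsP [j /andP [jA /eqP jt]] /existsP [j' /andP [jB /eqP jt']].
have jj : j' = j by apply: ord_inj; rewrite jt jt'.
by move/setP/(_ j): AB; rewrite inE jA -jj jB in_set0.
Qed.

Lemma nL_large : (4 <= nL)%N. Proof. rewrite /nL; lia. Qed.
Lemma nR_large : (13 <= nR)%N. Proof. rewrite /nR; lia. Qed.

Variables (A B : {set 'I_N}).

Lemma posL_spec i : (i < nL)%N ->
  ((i < 6 * N + 4)%N /\ posL A i = (Z.of_nat i mod 2, Z.of_nat i / 2)%Z) \/
  (exists t, (t < N)%N /\ i = (6 * N + 4 + t)%N /\
     ((nat_in A t /\ posL A i = (2, 3 * Z.of_nat t + 3)%Z) \/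
      (~~ nat_in A t /\ posL A i = (-1, 3 * Z.of_nat t + 3)%Z))).
Proof.
rewrite /nL /posL => Hi; case: ifP => H1; [by left|right].
exists (i - (6 * N + 4))%N; split; [lia|split; [lia|]].
by case: ifP => H2; [left|right].
Qed.

Lemma posR_spec i : (i < nR)%N ->
  ((i < 10)%N /\ posR B i = nth (0,0)%Z tabR i) \/
  ((10 <= i < 6 * N + 15)%N /\
     posR B i = (4 + Z.of_nat (i - 7) mod 2, Z.of_nat (i - 7) / 2 - 2)%Z) \/
  (exists t, (t < N)%N /\ i = (6 * N + 15 + t)%N /\
     ((nat_in B t /\ posR B i = (3, 3 * Z.of_nat t + 3)%Z) \/
      (~~ nat_in B t /\ posR B i = (6, 3 * Z.of_nat t + 3)%Z))).
Proof.
rewrite /nR /posR => Hi; case: ifP => H0; [by left|right].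
case: ifP => H1; [left; split=> //; lia|right].
exists (i - (6 * N + 15))%N; split; [lia|split; [lia|]].
by case: ifP => H2; [left|right].
Qed.

Lemma posL_strip i : (i < 6 * N + 4)%N -> posL A i = (Z.of_nat i mod 2, Z.of_nat i / 2)%Z.
Proof. by rewrite /posL => ->. Qed.

Lemma posL_tooth t : (t < N)%N -> posL A (6 * N + 4 + t) =
  if nat_in A t then (2, 3 * Z.of_nat t + 3)%Z else (-1, 3 * Z.of_nat t + 3)%Z.
Proof.
move=> ht; rewrite /posL ifF; last by lia.
by have -> : (6 * N + 4 + t - (6 * N + 4))%N = t by lia.
Qed.

Lemma posR_strip i : (10 <= i)%N -> (i < 6 * N + 15)%N ->
  posR B i = (4 + Z.of_nat (i - 7) mod 2, Z.of_nat (i - 7) / 2 - 2)%Z.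
Proof. by move=> h1 h2; rewrite /posR ifF ?h2 //; lia. Qed.

Lemma posR_tooth t : (t < N)%N -> posR B (6 * N + 15 + t) =
  if nat_in B t then (3, 3 * Z.of_nat t + 3)%Z else (6, 3 * Z.of_nat t + 3)%Z.
Proof.
move=> ht; rewrite /posR ifF; last by lia.
rewrite ifF; last by lia.
by have -> : (6 * N + 15 + t - (6 * N + 15))%N = t by lia.
Qed.

Lemma posL_core j : (j < 4)%N -> posL A j = nth (0,0)%Z [:: (0,0); (1,0); (0,1); (1,1)]%Z j.
Proof.
move=> h; rewrite posL_strip; last by lia.
by case: j h => [|[|[|[|j]]]].
Qed.

Definition tabR13 : seq (Z * Z) := tabR ++ [:: (5,-1); (4,0); (5,0)]%Z.

Lemma posR_head i : (i < 13)%N -> posR B i = nth (0,0)%Z tabR13 i.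
Proof.
move=> h; case: (ltnP i 10) => h10.
- by rewrite /posR h10 /tabR13 nth_cat h10.
- rewrite posR_strip //; last by lia.
  by case: i h h10 => [|[|[|[|[|[|[|[|[|[|[|[|[|i]]]]]]]]]]]]].
Qed.

Lemma posLR j : (j < 2)%N -> posL A j = posR B j.
Proof. by move=> h; rewrite posL_core ?posR_head; case: j h => [|[|j]]. Qed.

Ltac caseL H := case: (posL_spec H) => [[? ->]|[? [? [? [[? ->]|[? ->]]]]]].
Ltac caseR H := case: (posR_spec H) => [[? ->]|[[? ->]|[? [? [? [[? ->]|[? ->]]]]]]].
Ltac tabR_cases v := destruct v as [|[|[|[|[|[|[|[|[|[|v]]]]]]]]]]; cbn [nth tabR fst snd] in *.

Lemma close_teeth u v : (2 <= u)%N -> (u < nL)%N -> (2 <= v)%N -> (v < nR)%N ->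
  (tdist2 (posL A u) (posR B v) <= 1)%Z ->
  exists t, [/\ u = (6 * N + 4 + t)%N, v = (6 * N + 15 + t)%N, nat_in A t & nat_in B t].
Proof.
move=> u2 uL v2 vR /tdist2_le1.
case: (posL_spec uL) => [[? ->]|[tL [? [uE [[tA ->]|[? ->]]]]]];
case: (posR_spec vR) => [[? ->]|[[? ->]|[tR [? [vE [[tB ->]|[? ->]]]]]]];
  cbn [fst snd] => -[h1 [h2 h3]]; try (exfalso; lattice_lia);
  try (match goal with H : is_true (v < 10)%N |- _ => tabR_cases v; exfalso; lattice_lia end).
have E : tR = tL by lattice_lia.
by subst tR; exists tL.
Qed.

Lemma teeth_touch t : (t < N)%N -> nat_in A t -> nat_in B t ->
  tdist2 (posL A (6 * N + 4 + t)) (posR B (6 * N + 15 + t)) = 1%Z.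
Proof. by move=> ht tA tB; rewrite posL_tooth // posR_tooth // tA tB; lattice_unit. Qed.

Lemma posL_inj i j : (i < nL)%N -> (j < nL)%N -> posL A i = posL A j -> i = j.
Proof.
move=> iL jL; caseL iL; caseL jL => E;
  have := f_equal fst E; have := f_equal snd E; lattice_lia.
Qed.

Lemma posR_inj i j : (i < nR)%N -> (j < nR)%N -> posR B i = posR B j -> i = j.
Proof.
move=> iR jR; caseR iR; caseR jR => E; have := f_equal fst E; have := f_equal snd E;
  try (match goal with H : is_true (i < 10)%N |- _ => tabR_cases i end);
  try (match goal with H : is_true (j < 10)%N |- _ => tabR_cases j end);
  lattice_lia.
Qed.

Lemma posL_apex i : (3 <= i)%N -> (i < nL)%N -> exists p q w, lattice_apex (posL A) i p q w.
Proof.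
move=> i3 iL; case: (posL_spec iL) => [[istrip _]|[t [tN [-> _]]]].
- exists (i - 1)%N, (i - 2)%N, (i - 3)%N; rewrite /lattice_apex /is_apex !posL_strip; try lia.
  have [k ik] : exists k, (i = 2 * k \/ i = 2 * k + 1)%N by exists i./2; lia.
  by case: ik => ik; rewrite ik; solve_apex.
- case tA: (nat_in A t).
  + by exists (6 * t + 7)%N, (6 * t + 9)%N, (6 * t + 8)%N;
      rewrite /lattice_apex /is_apex posL_tooth // tA !posL_strip; try lia; solve_apex.
  + by exists (6 * t + 6)%N, (6 * t + 4)%N, (6 * t + 5)%N;
      rewrite /lattice_apex /is_apex posL_tooth // tA !posL_strip; try lia; solve_apex.
Qed.

Lemma posR_apex i : (3 <= i)%N -> (i < nR)%N -> exists p q w, lattice_apex (posR B) i p q w.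
Proof.
move=> i3 iR; case: (ltnP i 13) => i13.
  destruct i as [|[|[|[|[|[|[|[|[|[|[|[|[|i]]]]]]]]]]]]]; try lia;
  [ exists 1%N, 2%N, 0%N | exists 2%N, 3%N, 1%N | exists 3%N, 4%N, 2%N
  | exists 3%N, 5%N, 4%N | exists 5%N, 6%N, 3%N | exists 6%N, 7%N, 5%N
  | exists 7%N, 8%N, 6%N | exists 8%N, 9%N, 7%N | exists 10%N, 8%N, 9%N
  | exists 11%N, 10%N, 8%N ];
  by rewrite /lattice_apex /is_apex !posR_head //; solve_apex.
case: (posR_spec iR) => [[? _]|[[istrip _]|[t [tN [-> _]]]]]; first lia.
- exists (i - 1)%N, (i - 2)%N, (i - 3)%N; rewrite /lattice_apex /is_apex !posR_strip; try lia.
  have [k ik] : exists k, (i - 7 = 2 * k \/ i - 7 = 2 * k + 1)%N by exists (i - 7)./2; lia.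
  by case: ik => ik; solve_apex.
- case tB: (nat_in B t).
  + by exists (6 * t + 17)%N, (6 * t + 15)%N, (6 * t + 16)%N;
      rewrite /lattice_apex /is_apex posR_tooth // tB !posR_strip; try lia; solve_apex.
  + by exists (6 * t + 18)%N, (6 * t + 20)%N, (6 * t + 19)%N;
      rewrite /lattice_apex /is_apex posR_tooth // tB !posR_strip; try lia; solve_apex.
Qed.

Lemma posL_special_nbr j u : (j < 2)%N -> (u < nL)%N ->
  tdist2 (posL A j) (posL A u) = 1%Z -> (u < 4)%N.
Proof.
move=> j2 uL /Z.eq_le_incl/tdist2_le1; rewrite posL_core; last by lia.
by caseL uL; case: j j2 => [|[|j]] // _; cbn [nth]; lattice_lia.
Qed.

Lemma posR_special_nbr j v : (j < 2)%N -> (v < nR)%N ->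
  tdist2 (posR B j) (posR B v) = 1%Z -> (v < 4)%N.
Proof.
move=> j2 vR /Z.eq_le_incl/tdist2_le1; rewrite posR_head; last by lia.
caseR vR; case: j j2 => [|[|j]] // _; cbn [nth tabR13 tabR cat];
  try (match goal with H : is_true (v < 10)%N |- _ => tabR_cases v end); lattice_lia.
Qed.
End Positions.

(** * The glued graph *)


Lemma inord_special_inj n : (1 <= n)%N -> injective (fun i : 'I_2 => inord i : 'I_n.+1).
Proof.
move=> n1 i j /(f_equal (@nat_of_ord _)); rewrite !inordK; [exact: val_inj | |];
  by apply: leq_trans (ltn_ord _) _.
Qed.

Lemma inord_specialE n (u : 'I_n.+1) : (1 <= n)%N ->
  [exists i : 'I_2, (inord i : 'I_n.+1) == u] = (u < 2)%N.
Proof.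
move=> n1; apply/existsP/idP => [[i /eqP <-]|u2].
  by rewrite inordK ?ltn_ord //; apply: leq_trans (ltn_ord i) _.
by exists (Ordinal u2); rewrite inord_val.
Qed.

Section Glued.
Variable N : nat.

Definition LG (A : {set 'I_N}) : sgraph 2 :=
  pos_sgraph tadj (fun u : 'I_(nL N) => posL A u) (fun i : 'I_2 => inord i).

Definition RG (B : {set 'I_N}) : sgraph 2 :=
  pos_sgraph tadj (fun v : 'I_(nR N) => posR B v) (fun i : 'I_2 => inord i).

Lemma LG_wf A : sgraph_wf (LG A).
Proof. by apply: pos_sgraph_wf; [exact: tadjC|exact: tadj_irr|apply: inord_special_inj; lia]. Qed.

Lemma RG_wf B : sgraph_wf (RG B).
Proof. by apply: pos_sgraph_wf; [exact: tadjC|exact: tadj_irr|apply: inord_special_inj; lia]. Qed.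

Variables A B : {set 'I_N}.

Local Notation G := (gV (LG A) (RG B)).
Local Notation gadjG := (gadj (LG A) (RG B)).

Definition gpos (x : G) : Z * Z := glued_pos x.

Lemma special_posLR (i : 'I_2) :
  posL A (inord i : 'I_(nL N)) = posR B (inord i : 'I_(nR N)).
Proof. by have i2 := ltn_ord i; rewrite !inordK; [exact: posLR|lia|lia]. Qed.

Lemma RG_special_inj : injective (sS (RG B)).
Proof. by apply: inord_special_inj; lia. Qed.

Lemma gadjE (x y : G) : gadjG x y = tadj (gpos x) (gpos y) && ~~ crossing x y.
Proof. by apply: gadj_pos; [exact: RG_special_inj|exact: special_posLR]. Qed.

Definition vL (i : nat) : G := inl (inord i).
Definition vR (i : nat) : G := liftR (LG A) (RG B) (inord i).

Definition grank (x : G) : nat :=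
  match x with inl u => nat_of_ord u | inr v => (nL N + val v)%N end.

Lemma gpos_vL i : (i < nL N)%N -> gpos (vL i) = posL A i.
Proof. by move=> iL; rewrite /= inordK. Qed.

Lemma gpos_vR i : (i < nR N)%N -> gpos (vR i) = posR B i.
Proof. by move=> iR; rewrite /gpos /vR (glued_pos_liftR special_posLR) /= inordK. Qed.

Lemma vR_small i : (i < 2)%N -> vR i = vL i.
Proof. by move=> i2; exact: (liftR_sS (LG A) (Ordinal i2) RG_special_inj). Qed.

Lemma vR_inr j : (2 <= j)%N -> (j < nR N)%N ->
  exists nsv, vR j = inr (exist _ (inord j) nsv).
Proof.
move=> j2 jR; rewrite /vR; case: (liftR_spec (LG A) (R := RG B) (inord j)) => [[i [ji _]]|//].
by move: (congr1 (@nat_of_ord _) ji); rewrite /= !inordK //; have := ltn_ord i; lia.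
Qed.

Lemma vertex_cases (x : G) :
  (exists2 i, (i < nL N)%N & x = vL i) \/ (exists j, [/\ (2 <= j)%N, (j < nR N)%N & x = vR j]).
Proof.
case: x => [u|v]; first by left; exists u => //; rewrite /vL inord_val.
right; exists (val v); split => //; last by rewrite /vR inord_val liftR_val.
by rewrite leqNgt -inord_specialE; [exact: (valP v)|lia].
Qed.

Lemma crossing_vR i j : crossing (vR i) (vR j) = false.
Proof. exact: crossing_liftR. Qed.

Lemma crossing_vLR i j : (i < nL N)%N -> (2 <= j)%N -> (j < nR N)%N ->
  crossing (vL i) (vR j) = (2 <= i)%N /\ crossing (vR j) (vL i) = (2 <= i)%N.
Proof.
move=> iL j2 jR; have [nsv ->] := vR_inr j2 jR.
rewrite /= inord_specialE; last by have := nL_large N; rewrite /nL; lia.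
by rewrite inordK // -leqNgt.
Qed.

Lemma gadj_vL i j : (i < nL N)%N -> (j < nL N)%N ->
  gadjG (vL i) (vL j) = tadj (posL A i) (posL A j).
Proof. by move=> iL jL; rewrite gadjE !gpos_vL // andbT. Qed.

Lemma gadj_vR i j : (i < nR N)%N -> (j < nR N)%N ->
  gadjG (vR i) (vR j) = tadj (posR B i) (posR B j).
Proof. by move=> iR jR; rewrite gadjE !gpos_vR // crossing_vR andbT. Qed.

Lemma grank_vL i : (i < nL N)%N -> grank (vL i) = i.
Proof. by move=> iL; rewrite /= inordK. Qed.

Lemma grank_vR j : (2 <= j)%N -> (j < nR N)%N -> grank (vR j) = (nL N + j)%N.
Proof. by move=> j2 jR; have [nsv ->] := vR_inr j2 jR; rewrite /= inordK. Qed.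

Lemma grank_vR_lt p i : (p < i)%N -> (2 <= i)%N -> (i < nR N)%N ->
  (grank (vR p) < grank (vR i))%N.
Proof.
move=> pi i2 iR; rewrite (grank_vR i2 iR).
case: (ltnP p 2) => p2; last by rewrite grank_vR //; [lia | exact: ltn_trans pi iR].
have pL : (p < nL N)%N by rewrite /nL; lia.
by rewrite vR_small // grank_vL //; lia.
Qed.

Lemma vL_apex i p q w : (i < nL N)%N -> lattice_apex (posL A) i p q w ->
  is_apex gadjG gpos grank (vL i) (vL p) (vL q) (vL w).
Proof.
move=> iL [/= pi qi wi adj e].
have [pL qL wL] : [/\ (p < nL N)%N, (q < nL N)%N & (w < nL N)%N] by split; lia.
by split; rewrite ?grank_vL ?gadj_vL ?gpos_vL.
Qed.

Lemma vR_apex i p q w : (2 <= i)%N -> (i < nR N)%N -> lattice_apex (posR B) i p q w ->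
  is_apex gadjG gpos grank (vR i) (vR p) (vR q) (vR w).
Proof.
move=> i2 iR [/= pi qi wi adj e].
have [pR qR wR] : [/\ (p < nR N)%N, (q < nR N)%N & (w < nR N)%N] by split; lia.
by split; rewrite ?grank_vR_lt ?gadj_vR ?gpos_vR.
Qed.

Lemma vR2_apex : is_apex gadjG gpos grank (vR 2) (vL 0) (vL 1) (vL 2).
Proof.
have nL3 : (3 < nL N)%N by rewrite /nL; lia.
have nR3 : (3 < nR N)%N by rewrite /nR; lia.
rewrite /is_apex -{1 2}(vR_small (_ : 0 < 2)%N) // -{1 2}(vR_small (_ : 1 < 2)%N) //.
split; try by apply: grank_vR_lt; lia.
- by rewrite grank_vL ?grank_vR //; lia.
- by rewrite !gadj_vR ?gadj_vL ?posR_head ?posL_core //; lia.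
- by rewrite !gpos_vR ?gpos_vL ?posR_head ?posL_core //; lia.
Qed.

Lemma glued_triangulated : triangulated gadjG gpos grank (fun x => grank x < 3)%N.
Proof.
move=> x; rewrite -leqNgt; case: (vertex_cases x) => [[i iL ->]|[j [j2 jR ->]]].
  rewrite grank_vL // => i3; have [p [q [w apex]]] := posL_apex A i3 iL.
  by exists (vL p), (vL q), (vL w); exact: vL_apex.
move=> _; case: (ltnP j 3) => j3.
  have -> : j = 2%N by lia.
  by exists (vL 0), (vL 1), (vL 2); exact: vR2_apex.
have [p [q [w apex]]] := posR_apex B j3 jR.
by exists (vR p), (vR q), (vR w); exact: vR_apex.
Qed.

Lemma base_vL x : (grank x < 3)%N -> exists2 i, (i < 3)%N & x = vL i.
Proof.
case: (vertex_cases x) => [[i iL ->]|[j [j2 jR ->]]]; first by rewrite grank_vL // => i3; exists i.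
by rewrite grank_vR //; have := nL_large N; lia.
Qed.

Lemma base_triangle i j : (i < 3)%N -> (j < 3)%N -> i != j -> gadjG (vL i) (vL j).
Proof.
have := nL_large N => nL4 i3 j3; rewrite gadj_vL ?posL_core; try lia.
by case: i j i3 j3 => [|[|[|i]]] [|[|[|j]]].
Qed.

Lemma glued_connected x y : connect gadjG x y.
Proof.
apply: (triangulated_connect glued_triangulated).
- exact: gadj_sym (LG_wf A).1 (RG_wf B).1.
- move=> u v /base_vL [i i3 ->] /base_vL [j j3 ->].
  by case: (eqVneq i j) => [->|ij]; [exact: connect0 | exact/connect1/base_triangle].
- by exists (vL 0); rewrite /= inordK //; have := nL_large N; lia.
Qed.

Lemma same_side (x y : G) : ~~ crossing x y ->
  (exists i j, [/\ (i < nL N)%N, (j < nL N)%N, x = vL i & y = vL j]) \/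
  (exists i j, [/\ (i < nR N)%N, (j < nR N)%N, x = vR i & y = vR j]).
Proof.
have nR4 : (4 <= nR N)%N by have := nR_large N; lia.
have to_vR i : (i < nL N)%N -> ~~ (2 <= i)%N -> vL i = vR i /\ (i < nR N)%N.
  by rewrite -ltnNge => iL i2; split; [rewrite vR_small | lia].
case: (vertex_cases x) => [[i iL ->]|[i [i2 iR ->]]];
  case: (vertex_cases y) => [[j jL ->]|[j [j2 jR ->]]].
- by left; exists i, j.
- rewrite (crossing_vLR iL j2 jR).1 => /(to_vR _ iL) [-> iR].
  by right; exists i, j.
- rewrite (crossing_vLR jL i2 iR).2 => /(to_vR _ jL) [-> jR].
  by right; exists i, j.
- by right; exists i, j.
Qed.

Lemma card_glued : (#|G| <= 14 * N + 19)%N.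
Proof. by apply: leq_trans (card_gV _ _) _; rewrite /= /nL /nR; lia. Qed.

(* The special vertices and their neighbours [(0,1)], [(1,1)] in [L] and [(1,-1)], [(2,-1)]
   in [R]. *)
Definition core (x : G) : bool :=
  match x with inl u => (u < 4)%N | inr v => (val v < 4)%N end.

Lemma core_vL i : (i < nL N)%N -> core (vL i) = (i < 4)%N.
Proof. by move=> iL; rewrite /= inordK. Qed.

Lemma core_vR j : (2 <= j)%N -> (j < nR N)%N -> core (vR j) = (j < 4)%N.
Proof. by move=> j2 jR; have [nsv ->] := vR_inr j2 jR; rewrite /= inordK. Qed.

Lemma gadj_special (i : 'I_2) x :
  gadjG (gspec (LG A) (RG B) i) x = tadj (posL A i) (gpos x).
Proof.
have iL : (i < nL N)%N by apply: leq_trans (ltn_ord i) _; have := nL_large N; lia.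
rewrite gadjE /= inordK //; case: x => [u|v] /=; first by rewrite andbT.
by rewrite negbK (_ : [exists _, _] = true) ?andbT //; apply/existsP; exists i.
Qed.

Lemma gNS_core : gNS (LG A) (RG B) = [set x | core x].
Proof.
have [nL4 nR4] := (nL_large N, nR_large N).
apply/setP => x; rewrite !inE; apply/existsP/idP => [[i /orP [/eqP ->|]]|].
  by rewrite /= inordK; have := ltn_ord i; lia.
have i2 := ltn_ord i; rewrite gadj_special => /Z.eqb_eq.
case: (vertex_cases x) => [[j jL ->]|[j [j2 jR ->]]]; rewrite ?core_vL ?core_vR //.
- by rewrite gpos_vL //; exact: posL_special_nbr.
- by rewrite gpos_vR // (posLR A B) //; exact: posR_special_nbr.
case: (vertex_cases x) => [[j jL ->]|[j [j2 jR ->]]]; rewrite ?core_vL ?core_vR // => j4.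
- case: j j4 {jL} => [|[|[|[|j]]]] // _.
  + by exists ord0; rewrite eqxx.
  + by exists ord_max; rewrite eqxx.
  + by exists ord0; apply/orP; right; rewrite gadj_special gpos_vL ?posL_core //; lia.
  + by exists ord_max; apply/orP; right; rewrite gadj_special gpos_vL ?posL_core //; lia.
- case: j j2 j4 {jR} => [|[|[|[|j]]]] // _ _.
  + by exists ord0; apply/orP; right; rewrite gadj_special gpos_vR ?posR_head ?posL_core //; lia.
  + by exists ord_max; apply/orP; right; rewrite gadj_special gpos_vR ?posR_head ?posL_core //; lia.
Qed.

Lemma card_core : (#|[set x : G | core x]| <= 6)%N.
Proof.
have [nL4 nR4] := (nL_large N, nR_large N).
apply: leq_trans (card_size [:: vL 0; vL 1; vL 2; vL 3; vR 2; vR 3]).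
apply: subset_leq_card; apply/subsetP => x; rewrite inE.
case: (vertex_cases x) => [[j jL ->]|[j [j2 jR ->]]]; rewrite ?core_vL ?core_vR // => j4.
- by case: j j4 {jL} => [|[|[|[|j]]]] // _; rewrite !inE eqxx ?orbT.
- by case: j j2 j4 {jR} => [|[|[|[|j]]]] // _ _; rewrite !inE eqxx ?orbT.
Qed.

Section Disjoint.
Hypothesis disjAB : A :&: B = set0.

Lemma crossing_far (x y : G) : crossing x y -> (1 < tdist2 (gpos x) (gpos y))%Z.
Proof.
have far i j : (i < nL N)%N -> (2 <= i)%N -> (2 <= j)%N -> (j < nR N)%N ->
    (1 < tdist2 (posL A i) (posR B j))%Z.
  move=> iL i2 j2 jR; apply/Z.nle_gt => /(close_teeth i2 iL j2 jR) [t [_ _ tA tB]].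
  exact: nat_in_disjoint disjAB tA tB.
case: (vertex_cases x) => [[i iL ->]|[i [i2 iR ->]]];
  case: (vertex_cases y) => [[j jL ->]|[j [j2 jR ->]]]; rewrite ?crossing_vR //.
- by rewrite (crossing_vLR iL j2 jR).1 gpos_vL ?gpos_vR // => i2; exact: far.
- by rewrite (crossing_vLR jL i2 iR).2 gpos_vL ?gpos_vR // tdist2C => j2; exact: far.
Qed.

Lemma gpos_inj : injective gpos.
Proof.
move=> x y e; have [/crossing_far|/same_side] := boolP (crossing x y); first by rewrite e tdist2xx.
case=> [[i [j [iL jL xi yj]]]|[i [j [iR jR xi yj]]]]; move: e; rewrite xi yj.
- by rewrite !gpos_vL // => /posL_inj ->.
- by rewrite !gpos_vR // => /posR_inj ->.
Qed.

Local Open Scope R_scope.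

Lemma disjoint_penny : penny gadjG.
Proof.
exists (fun x => tri_embed (gpos x)); split.
- move=> u v uv; apply/pdist_ge2; rewrite pdist2_tri_embed.
  have : tdist2 (gpos u) (gpos v) <> 0%Z.
    by move/tdist2_eq0/gpos_inj => euv; move: uv; rewrite euv eqxx.
  have := @tdist2_ge0 (gpos u) (gpos v) => ge0 ne0.
  have /IZR_le : (1 <= tdist2 (gpos u) (gpos v))%Z by lia.
  lra.
- move=> u v; rewrite pdist_eq2 pdist2_tri_embed gadjE /tadj.
  split => [/andP [/Z.eqb_eq -> _]|e]; first lra.
  have t1 : tdist2 (gpos u) (gpos v) = 1%Z.
    by apply: eq_IZR; move: e; set r := IZR (tdist2 _ _); lra.
  by rewrite t1 /=; apply/negP => /crossing_far; rewrite t1.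
Qed.

End Disjoint.

Section Rigidity.
Local Open Scope R_scope.

Lemma penny_rigid (c : G -> R * R) :
  (forall u v, u != v -> 2 <= pdist (c u) (c v)) ->
  (forall u v, gadjG u v <-> pdist (c u) (c v) = 2) ->
  forall x, c x = lattice_map (c (vL 0)) (c (vL 1)) (c (vL 2)) (gpos x).
Proof.
move=> sep edge; apply: (triangulated_rigid glued_triangulated).
- by move=> u v /edge/pdist_eq2.
- move=> u v cuv; case: (eqVneq u v) => // /sep/pdist_ge2.
  by rewrite cuv pdist2xx; lra.
- exact: lattice_map_tflip.
- move=> x /base_vL [i i3 ->]; have [e0 e1 e2] := lattice_map_base (c (vL 0)) (c (vL 1)) (c (vL 2)).
  rewrite gpos_vL ?posL_core; try (have := nL_large N; lia).
  by case: i i3 => [|[|[|i]]].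
Qed.

Lemma penny_disjoint : penny gadjG -> A :&: B = set0.
Proof.
case=> c [sep edge]; apply/setP => t; rewrite inE in_set0; apply/negP => /andP [tA tB].
have tN := ltn_ord t.
have iL : (6 * N + 4 + t < nL N)%N by rewrite /nL; lia.
have jR : (6 * N + 15 + t < nR N)%N by rewrite /nR; lia.
have unit u v : gadjG u v -> pdist2 (c u) (c v) = 4 by move/edge/pdist_eq2.
have : gadjG (vL (6 * N + 4 + t)) (vR (6 * N + 15 + t)).
  have rigid := penny_rigid sep edge.
  apply/edge/pdist_eq2; rewrite (rigid (vL _)) (rigid (vR _)).
  rewrite pdist2_lattice_map ?unit ?base_triangle //.
  by rewrite gpos_vL ?gpos_vR // teeth_touch ?nat_inE //=; lra.
by rewrite gadjE (crossing_vLR iL _ jR).1 ?andbF //; lia.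
Qed.

End Rigidity.

End Glued.

Lemma gpos_core N (A B A' B' : {set 'I_N}) (x : gV (LG A) (RG B)) :
  core x -> gpos x = gpos (A := A') (B := B') x.
Proof.
case: x => [u|v] /= x4.
  by rewrite !posL_strip //; apply: leq_trans x4 _; lia.
by rewrite !posR_head //; apply: leq_trans x4 _.
Qed.

Lemma glued_NS_iso N (A A' B B' : {set 'I_N}) : NS_iso (LG A) (RG B) (LG A') (RG B').
Proof.
exists id; split; first by move=> x y _ _.
split; [|split]; last by [].
- by rewrite imset_id !gNS_core.
- move=> x y; rewrite !gNS_core !inE => cx cy.
  by rewrite !gadjE (gpos_core A' B' cx) (gpos_core A' B' cy).
Qed.

Local Open Scope R_scope.

Lemma glued_size N (A B : {set 'I_N}) : (0 < N)%N ->
  INR #|gV (LG A) (RG B)| <= 33 * Rpower (INR N) (1 / INR 1).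
Proof.
move=> N0; rewrite Rdiv_1_r Rpower_1; last by apply: lt_0_INR; lia.
have /leP/le_INR := card_glued A B; rewrite plus_INR mult_INR.
have : 1 <= INR N by apply: (le_INR 1); lia.
rewrite /=; lra.
Qed.

Theorem theorem5p1 : disjointness_expressing penny 6 1.
Proof.
exists 33; split; first lra.
move=> N N0; exists 2%N, (@LG N), (@RG N); split.
  by move=> X; split; [exact: LG_wf | exact: RG_wf].
split; first by move=> A B; split; [exact: glued_connected | exact: glued_size].
split; first by move=> A A' B B'; exact: glued_NS_iso.
split; first by move=> A B; rewrite gNS_core card_core.
by move=> A B; split; [exact: penny_disjoint | exact: disjoint_penny].
Qed.
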